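(* Let $\mathscr{S}=(T,S,\sigma,\mu,\tau_T,\tau_S)$ be a relaxed scenario. Then $G_{<}(\mathscr{S})$ and $G_{>}(\mathscr{S})$ are cographs. If both $S$ and $T$ are binary trees, then $G_{=}(\mathscr{S})$ is also a cograph.
   Context: All trees are planted phylogenetic trees: a tree $T$ has a distinguished vertex $0_T$ of degree $1$ whose unique neighbor $\rho_T$ is the root, and every vertex other than $0_T$ and the leaves $L(T)$ has at least two children; it is binary if every such vertex has exactly two children. For $x,y\in V(T)$ write $y\preceq_T x$ if $x$ lies on the path from $0_T$ to $y$; edges are written $uv$ with $v\prec_T u$. $\mathrm{lca}_T$ denotes the last common ancestor. A time map for $T$ is $\tau_T\colon V(T)\to\mathbb{R}$ with $\tau_T(x)<\tau_T(y)$ whenever $x\prec_T y$. A relaxed scenario $\mathscr{S}=(T,S,\sigma,\mu,\tau_T,\tau_S)$ consists of a gene tree $T$ with time map $\tau_T$, a species tree $S$ with time map $\tau_S$, a map $\sigma\colon L(T)\to M$ with $M\subseteq L(S)$, and a map $\mu\colon V(T)\to V(S)\cup E(S)$ such that (S0) $\mu(x)=0_S$ iff $x=0_T$; (S1) $\mu(x)\in L(S)$ iff $x\in L(T)$, in which case $\mu(x)=\sigma(x)$; (S2) if $\mu(x)\in V(S)$ then $\tau_S(\mu(x))=\tau_T(x)$; (S3) if $\mu(x)=uv\in E(S)$ then $\tau_S(v)<\tau_T(x)<\tau_S(u)$. The graphs $G_{=}(\mathscr{S})$, $G_{<}(\mathscr{S})$, $G_{>}(\mathscr{S})$ have vertex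 set $L(T)$, and for distinct $x,y$ the pair $xy$ is an edge of $G_{=}(\mathscr{S})$, $G_{<}(\mathscr{S})$, resp. $G_{>}(\mathscr{S})$ iff $\tau_T(\mathrm{lca}_T(x,y))$ is $=$, $<$, resp. $>$ than $\tau_S(\mathrm{lca}_S(\sigma(x),\sigma(y)))$. A cograph is a graph with no induced path on four vertices. *)

From HB Require Import structures.
From mathcomp Require Import all_boot all_order all_algebra.
From mathcomp Require Import reals.
Set Implicit Arguments. Unset Strict Implicit. Unset Printing Implicit Defensive.
Import Order.TTheory GRing.Theory Num.Theory.
Local Open Scope ring_scope.

(* A planted phylogenetic tree on a finite vertex type V is given by its
   planted vertex [r0] (= 0_T) and the parent map [par]: [par v] is the
   unique neighbour of v on the path towards 0_T; [par r0 = r0] by convention. *)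
Definition children {V : finType} (r0 : V) (par : V -> V) (v : V) : {set V} :=
  [set w | (w != r0) && (par w == v)].

Record ptree (V : finType) := PTree {
  zero : V;
  par : V -> V;
  par_zero : par zero = zero;
  reach_zero : forall v, exists k, iter k par v = zero;
  zero_deg1 : #|children zero par zero| = 1%N;
  inner_ge2 : forall v, v != zero -> children zero par v != set0 ->
                (2 <= #|children zero par v|)%N
}.

Section Trees.
Context {V : finType} (T : ptree V).

Definition childrenT (v : V) := children (zero T) (par T) v.

Definition is_leaf (v : V) : bool := (v != zero T) && (childrenT v == set0).

Definition binary : Prop :=
  forall v, v != zero T -> ~~ is_leaf v -> #|childrenT v| = 2%N.

Definition preceq (y x : V) : Prop := exists k, iter k (par T) y = x.
Definition prec (y x : V) : Prop := preceq y x /\ y <> x.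

Definition is_lca (x y z : V) : Prop :=
  preceq x z /\ preceq y z /\ (forall w, preceq x w -> preceq y w -> preceq z w).

End Trees.

Definition time_map {R : realType} {V : finType} (T : ptree V) (tau : V -> R) : Prop :=
  forall x y, prec T x y -> tau x < tau y.

(* Images of mu: a vertex of S ([inl v]) or an edge of S, the edge (par v, v)
   with v <> 0_S being represented by its lower endpoint v ([inr v]). *)
Record relaxed_scenario {R : realType} {VT VS : finType}
  (T : ptree VT) (S : ptree VS) (sigma : VT -> VS) (mu : VT -> VS + VS)
  (tauT : VT -> R) (tauS : VS -> R) : Prop := {
  rs_tauT : time_map T tauT;
  rs_tauS : time_map S tauS;
  rs_sigma : forall x, is_leaf T x -> is_leaf S (sigma x);
  rs_edge : forall x v, mu x = inr v -> v != zero S;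
  rs_S0 : forall x, mu x = inl (zero S) <-> x = zero T;
  rs_S1a : forall x, (exists l, mu x = inl l /\ is_leaf S l) <-> is_leaf T x;
  rs_S1b : forall x, is_leaf T x -> mu x = inl (sigma x);
  rs_S2 : forall x v, mu x = inl v -> tauS v = tauT x;
  rs_S3 : forall x v, mu x = inr v -> tauS v < tauT x /\ tauT x < tauS (par S v)
}.

Definition G_rel {R : realType} {VT VS : finType} (cmp : R -> R -> Prop)
  (T : ptree VT) (S : ptree VS) (sigma : VT -> VS)
  (tauT : VT -> R) (tauS : VS -> R) (x y : VT) : Prop :=
  x <> y /\ exists a b, is_lca T x y a /\ is_lca S (sigma x) (sigma y) b /\
                        cmp (tauT a) (tauS b).

Definition G_eq {R : realType} {VT VS : finType} (T : ptree VT) (S : ptree VS)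
  (sigma : VT -> VS) (tauT : VT -> R) (tauS : VS -> R) :=
  G_rel (fun a b => a = b) T S sigma tauT tauS.
Definition G_lt {R : realType} {VT VS : finType} (T : ptree VT) (S : ptree VS)
  (sigma : VT -> VS) (tauT : VT -> R) (tauS : VS -> R) :=
  G_rel (fun a b => a < b) T S sigma tauT tauS.
Definition G_gt {R : realType} {VT VS : finType} (T : ptree VT) (S : ptree VS)
  (sigma : VT -> VS) (tauT : VT -> R) (tauS : VS -> R) :=
  G_rel (fun a b => a > b) T S sigma tauT tauS.

Definition cograph {V : Type} (P : V -> Prop) (E : V -> V -> Prop) : Prop :=
  ~ exists a b c d, P a /\ P b /\ P c /\ P d /\
      a <> b /\ a <> c /\ a <> d /\ b <> c /\ b <> d /\ c <> d /\
      E a b /\ E b c /\ E c d /\ ~ E a c /\ ~ E b d /\ ~ E a d.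

(* Write f x y = tauT (lca_T x y) and g x y = tauS (lca_S (sigma x) (sigma y)).
   The ancestors of a vertex form a chain and time maps are strictly monotone
   along it, so f and g are symmetric and ultrametric:
   f x z <= max (f x y) (f y z); hence in every triangle the two largest
   values agree.  For any two such functions the graph {f < g} has no induced
   P4 a-b-c-d: the triangles abc and bcd force g a b = g b c = g c d =: m with
   g b d < m, so g a d = m, while f a d < m.  G_> is the same graph with f and
   g swapped.  For G_= one needs strict triangles, which binary trees provide
   (three leaves never have pairwise equal lca); this applies to g because the
   ends of a G_= edge have distinct species, as tauT x = tauS (sigma x) for a
   leaf x. *)

From mathcomp Require Import all_boot all_order all_algebra reals.
From mathcomp Require Import boolp.
Import Order.TTheory.
Set Implicit Arguments. Unset Strict Implicit.
Local Open Scope order_scope.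

Lemma cographI (V : Type) (P : V -> Prop) (E : V -> V -> Prop) :
  (forall a b c d, P a -> P b -> P c -> P d -> a <> b -> b <> c -> c <> d ->
     E a b -> E b c -> E c d -> ~ E a c -> ~ E b d -> ~ E a d -> False) ->
  cograph P E.
Proof.
move=> noP4 [a [b [c [d [Pa [Pb [Pc [Pd [ab [_ [_ [bc [_ [cd H]]]]]]]]]]]]]].
by case: H => Eab [Ebc [Ecd [nEac [nEbd nEad]]]]; exact: (noP4 a b c d).
Qed.

Lemma cograph_neq (V : Type) (P : V -> Prop) (E : V -> V -> Prop) :
  cograph P E -> cograph P (fun x y => x <> y /\ E x y).
Proof.
move=> coE [a [b [c [d [Pa [Pb [Pc [Pd [ab [ac [ad [bc [bd [cd H]]]]]]]]]]]]]].
case: H => -[_ Eab] [[_ Ebc] [[_ Ecd] [nEac [nEbd nEad]]]]; apply: coE.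
by exists a, b, c, d; intuition.
Qed.

Lemma cograph_ext (V : Type) (P : V -> Prop) (E E' : V -> V -> Prop) :
  (forall x y, E' x y <-> E x y) -> cograph P E -> cograph P E'.
Proof.
move=> EE' coE [a [b [c [d H]]]]; apply: coE; exists a, b, c, d.
by rewrite !EE' in H.
Qed.

Section Ultrametric.
Context {disp : Order.disp_t} {R : orderType disp} {X : Type} (f : X -> X -> R).
Hypothesis f_ultra : forall x y z, f x z <= f x y \/ f x z <= f y z.
Hypothesis fC : forall x y, f x y = f y x.

Lemma ultra_lt_trans m x y z : f x y < m -> f y z < m -> f x z < m.
Proof. by move=> lt_xy lt_yz; case: (f_ultra x y z) => /le_lt_trans; apply. Qed.

Lemma ultra_isosceles x y z : f x z < f x y -> f y z = f x y.
Proof.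
move=> lt_xz; apply: le_anti; apply/andP; split.
  by case: (f_ultra y x z); rewrite ?(fC y x) // => /le_trans; apply; exact: ltW.
case: (f_ultra x z y); first by rewrite leNgt lt_xz.
by rewrite (fC z y).
Qed.

End Ultrametric.

Section UltrametricPair.
Context {disp : Order.disp_t} {R : orderType disp} {X : Type} (f g : X -> X -> R).
Hypothesis f_ultra : forall x y z, f x z <= f x y \/ f x z <= f y z.
Hypothesis g_ultra : forall x y z, g x z <= g x y \/ g x z <= g y z.
Hypothesis fC : forall x y, f x y = f y x.
Hypothesis gC : forall x y, g x y = g y x.

Lemma lt_edges_isosceles x y z : f x y < g x y -> f y z < g y z -> g x z <= f x z ->
  g y z = g x y /\ g x z < g x y.
Proof.
move=> lt_xy lt_yz ge_xz.
case: (f_ultra x y z) => le_xz.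
  have lt_g : g x z < g x y by apply: le_lt_trans ge_xz (le_lt_trans le_xz lt_xy).
  by split=> //; apply: ultra_isosceles.
have lt_g : g z x < g z y.
  by rewrite gC (gC z y); apply: le_lt_trans ge_xz (le_lt_trans le_xz lt_yz).
have iso := ultra_isosceles g_ultra gC lt_g.
by split; [rewrite gC -iso gC | rewrite gC (gC x y) iso].
Qed.

Lemma cograph_lt (P : X -> Prop) : cograph P (fun x y => f x y < g x y).
Proof.
apply: cographI => a b c d _ _ _ _ _ _ _ ab bc cd.
move=> /negP; rewrite -leNgt => ac /negP; rewrite -leNgt => bd; apply.
have [eq_bc lt_ac] := lt_edges_isosceles ab bc ac.
have [eq_cd lt_bd] := lt_edges_isosceles bc cd bd.
have lt_bd_ab : g b d < g b a by rewrite (gC b a) -eq_bc.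
have eq_ad : g a d = g a b by rewrite (ultra_isosceles g_ultra gC lt_bd_ab) gC.
rewrite eq_ad; apply: (ultra_lt_trans f_ultra ab).
apply: (ultra_lt_trans f_ultra (y := c)); first by rewrite -eq_bc.
by rewrite -eq_bc -eq_cd.
Qed.

Lemma eq_edges_isosceles x y z :
  f x y = g x y -> f y z = g y z -> f x z <> g x z -> f x y = f y z.
Proof.
move=> eq_xy eq_yz; case: (ltgtP (f x y) (f y z)) => // lt_f [].
- have lt_f' : f y x < f y z by rewrite fC.
  have lt_g : g y x < g y z by rewrite gC -eq_xy -eq_yz.
  rewrite fC gC (ultra_isosceles f_ultra fC lt_f').
  by rewrite (ultra_isosceles g_ultra gC lt_g).
- have lt_f' : f y z < f y x by rewrite (fC y x).
  have lt_g : g y z < g y x by rewrite (gC y x) -eq_xy -eq_yz.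
  rewrite (ultra_isosceles f_ultra fC lt_f') (ultra_isosceles g_ultra gC lt_g).
  by rewrite fC gC.
Qed.

Lemma cograph_eq (P : X -> Prop) :
  (forall x y z, P x -> P y -> P z -> x <> y -> y <> z ->
     f x y = g x y -> f y z = g y z -> f x y = f y z -> f x z < f x y) ->
  (forall x y z, P x -> P y -> P z -> x <> y -> y <> z ->
     f x y = g x y -> f y z = g y z -> g x y = g y z -> g x z < g x y) ->
  cograph P (fun x y => f x y = g x y).
Proof.
move=> f_strict g_strict.
apply: cographI => a b c d _ Pb Pc Pd _ bc cd ab_eq bc_eq cd_eq nac nbd; apply.
have f_ab_bc := eq_edges_isosceles ab_eq bc_eq nac.
have f_bc_cd := eq_edges_isosceles bc_eq cd_eq nbd.
have lt_f : f b d < f b a.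
  by rewrite (fC b a) f_ab_bc; apply: f_strict.
have lt_g : g b d < g b a.
  rewrite (gC b a) -ab_eq f_ab_bc bc_eq; apply: g_strict => //.
  by rewrite -bc_eq -cd_eq.
rewrite (ultra_isosceles f_ultra fC lt_f) (ultra_isosceles g_ultra gC lt_g).
by rewrite fC gC.
Qed.

End UltrametricPair.

Section PlantedTree.
Context {V : finType} (T : ptree V).

Lemma preceq_refl x : preceq T x x.
Proof. by exists 0%N. Qed.

Lemma preceq_trans x y z : preceq T x y -> preceq T y z -> preceq T x z.
Proof. by move=> [k <-] [m <-]; exists (m + k)%N; rewrite iterD. Qed.

Lemma preceq_par x : preceq T x (par T x).
Proof. by exists 1%N. Qed.

Lemma iter_par_zero k : iter k (par T) (zero T) = zero T.
Proof. by elim: k => //= k ->; rewrite par_zero. Qed.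

Lemma ancestors_comparable y a b : preceq T y a -> preceq T y b ->
  preceq T a b \/ preceq T b a.
Proof.
move=> [k <-] [m <-]; case: (leqP k m) => [le_km|/ltnW le_mk].
  by left; exists (m - k)%N; rewrite -iterD subnK.
by right; exists (k - m)%N; rewrite -iterD subnK.
Qed.

(* Iterating [par] from any vertex eventually stays at 0_T, so a cycle can only sit there. *)
Lemma par_cycle_zero a k : iter k.+1 (par T) a = a -> a = zero T.
Proof.
move=> cyc; have cycn j : iter (j * k.+1) (par T) a = a.
  by elim: j => // j IH; rewrite mulSn iterD IH cyc.
have [n reach_n] := reach_zero T a.
have le_n : (n <= n * k.+1)%N by rewrite leq_pmulr.
by rewrite -(cycn n) -(subnK le_n) iterD reach_n iter_par_zero.
Qed.

Lemma preceq_anti a b : preceq T a b -> preceq T b a -> a = b.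
Proof.
move=> [k ab] [m ba]; case mk: (m + k)%N => [|n].
  by move: mk => /eqP; rewrite addn_eq0 => /andP[_ /eqP k0]; rewrite -ab k0.
have a0 : a = zero T by apply: (@par_cycle_zero a n); rewrite -mk iterD ab ba.
by rewrite -ab a0 iter_par_zero.
Qed.

(* The first ancestor of x that lies above y is lca(x, y). *)
Lemma is_lca_exists x y : exists z, is_lca T x y z.
Proof.
have above_y : exists k, `[< preceq T y (iter k (par T) x) >].
  have [n reach_n] := reach_zero T x; exists n; apply/asboolP; rewrite reach_n.
  exact: reach_zero.
case: (ex_minnP above_y) => k /asboolP y_k k_min.
exists (iter k (par T) x); split; first by exists k.
split=> // w [j <-] y_j.
have le_kj : (k <= j)%N by apply/k_min/asboolP.
by exists (j - k)%N; rewrite -iterD subnK.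
Qed.

Lemma is_lca_unique x y z z' : is_lca T x y z -> is_lca T x y z' -> z = z'.
Proof. by move=> [xz [yz z_min]] [xz' [yz' z'_min]]; apply: preceq_anti; auto. Qed.

Lemma is_lcaC x y z : is_lca T x y z -> is_lca T y x z.
Proof. by move=> [xz [yz z_min]]; do 2 split=> //; move=> w yw xw; apply: z_min. Qed.

Definition lca (x y : V) : V := projT1 (cid (is_lca_exists x y)).

Lemma lcaP x y : is_lca T x y (lca x y).
Proof. exact: projT2 (cid (is_lca_exists x y)). Qed.

Lemma lca_eq x y z : is_lca T x y z -> lca x y = z.
Proof. exact/is_lca_unique/lcaP. Qed.

Lemma lcaC x y : lca x y = lca y x.
Proof. exact/lca_eq/is_lcaC/lcaP. Qed.

Lemma lcaxx x : lca x x = x.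
Proof. apply: lca_eq; split; [exact: preceq_refl|split; [exact: preceq_refl|done]]. Qed.

Lemma preceq_leaf u v : is_leaf T v -> preceq T u v -> u = v.
Proof.
move=> /andP[v0 /eqP no_child] [[|k] //]; rewrite iterS; set c := iter k (par T) u.
move=> par_c; case: (eqVneq c (zero T)) => [c0|c0].
  by move: v0; rewrite -par_c c0 par_zero eqxx.
have : c \in childrenT T v by rewrite inE c0 par_c eqxx.
by rewrite no_child inE.
Qed.

Lemma lca_neq_leaf x y : is_leaf T x -> x <> y -> x <> lca x y.
Proof.
move=> leaf_x xy x_lca; apply: xy; have [_ [y_lca _]] := lcaP x y.
by symmetry; apply: preceq_leaf leaf_x _; rewrite x_lca.
Qed.

Lemma child_preceq c w : c \in childrenT T w -> preceq T c w.
Proof. by rewrite inE => /andP[_ /eqP <-]; exact: preceq_par. Qed.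

Lemma child_neq c w : c \in childrenT T w -> c <> w.
Proof.
rewrite inE => /andP[/eqP c0 /eqP par_c] cw; apply: c0.
by apply: (@par_cycle_zero c 0); rewrite /= par_c cw.
Qed.

Lemma exists_child_above u w : preceq T u w -> u <> w ->
  exists2 c, c \in childrenT T w & preceq T u c.
Proof.
move=> [k0 u_w] uw.
have reach_w : exists k, iter k (par T) u == w by exists k0; rewrite u_w.
case: (ex_minnP reach_w) => -[/eqP //|k] /eqP; rewrite iterS; set c := iter k (par T) u.
move=> par_c k_min; exists c; last by exists k.
rewrite inE par_c eqxx andbT; apply/eqP=> c0.
have := k_min k; rewrite -/c -par_c c0 par_zero eqxx => /(_ isT).
by rewrite ltnn.
Qed.

Lemma lca_children_neq x y c1 c2 :
  c1 \in childrenT T (lca x y) -> c2 \in childrenT T (lca x y) ->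
  preceq T x c1 -> preceq T y c2 -> c1 <> c2.
Proof.
move=> c1_child c2_child x_c1 y_c2 c12; apply: (child_neq c1_child).
have [_ [_ lca_min]] := lcaP x y.
by apply: preceq_anti (child_preceq c1_child) _; apply: lca_min; rewrite // c12.
Qed.

Lemma binary_children_eq w c1 c2 c3 : binary T ->
  c1 \in childrenT T w -> c2 \in childrenT T w -> c3 \in childrenT T w ->
  c1 <> c2 -> c2 <> c3 -> c1 = c3.
Proof.
move=> bin c1w c2w c3w c12 c23.
have w0 : w != zero T.
  apply/eqP=> w0; apply: c12; move: (zero_deg1 T) c1w c2w.
  by rewrite /childrenT w0 => /eqP/cards1P[u ->]; rewrite !inE => /eqP-> /eqP->.
have nleaf_w : ~~ is_leaf T w.
  by rewrite /is_leaf w0 /=; apply/set0Pn; exists c1.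
move: (bin w w0 nleaf_w) c1w c2w c3w c12 c23 => /eqP/cards2P[u [v [_ ->]]].
by rewrite !inE => /orP[]/eqP-> /orP[]/eqP-> /orP[]/eqP->.
Qed.

Lemma binary_lca_prec x y z : binary T ->
  is_leaf T x -> is_leaf T y -> is_leaf T z -> x <> y -> y <> z ->
  lca x y = lca y z -> prec T (lca x z) (lca x y).
Proof.
move=> bin leaf_x leaf_y leaf_z xy yz lca_xyz.
have [x_w [y_w _]] := lcaP x y; have [_ [z_w _]] := lcaP y z.
rewrite -lca_xyz in z_w.
have y_neq : y <> lca x y.
  by rewrite lcaC; apply: lca_neq_leaf => // yx; apply: xy.
have z_neq : z <> lca x y.
  by rewrite lca_xyz lcaC; apply: lca_neq_leaf => // zy; apply: yz.
have [cx cx_child x_cx] := exists_child_above x_w (lca_neq_leaf leaf_x xy).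
have [cy cy_child y_cy] := exists_child_above y_w y_neq.
have [cz cz_child z_cz] := exists_child_above z_w z_neq.
have cxy := lca_children_neq cx_child cy_child x_cx y_cy.
have cyz : cy <> cz.
  move: cy_child cz_child; rewrite lca_xyz => cy_child' cz_child'.
  exact: lca_children_neq cy_child' cz_child' y_cy z_cz.
have cxz := binary_children_eq bin cx_child cy_child cz_child cxy cyz.
have [_ [_ lca_min]] := lcaP x z.
have lca_cx : preceq T (lca x z) cx by apply: lca_min; rewrite // cxz.
split; first exact: preceq_trans lca_cx (child_preceq cx_child).
move=> eq_lca; apply: (child_neq cx_child).
by apply: preceq_anti (child_preceq cx_child) _; rewrite -eq_lca.
Qed.

End PlantedTree.

Section TimeMap.
Context {R : realType} {V : finType} (T : ptree V) (tau : V -> R).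
Hypothesis tau_time : time_map T tau.

Lemma time_map_le x y : preceq T x y -> tau x <= tau y.
Proof. by move=> xy; case: (eqVneq x y) => [->//|/eqP neq]; exact/ltW/tau_time. Qed.

Lemma time_map_inj_ancestors y a b :
  preceq T y a -> preceq T y b -> tau a = tau b -> a = b.
Proof.
move=> ya yb tau_ab; case: (eqVneq a b) => // /eqP ab; exfalso.
case: (ancestors_comparable ya yb) => [a_b|b_a].
  by have := tau_time (conj a_b ab); rewrite tau_ab ltxx.
by have := tau_time (conj b_a (nesym ab)); rewrite tau_ab ltxx.
Qed.

Lemma time_lca_ultra x y z :
  tau (lca T x z) <= tau (lca T x y) \/ tau (lca T x z) <= tau (lca T y z).
Proof.
have [x_xy [y_xy _]] := lcaP T x y; have [y_yz [z_yz _]] := lcaP T y z.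
have [_ [_ xz_min]] := lcaP T x z.
case: (ancestors_comparable y_xy y_yz) => [xy_yz|yz_xy].
  by right; apply/time_map_le/xz_min => //; exact: preceq_trans xy_yz.
by left; apply/time_map_le/xz_min => //; exact: preceq_trans yz_xy.
Qed.

Lemma time_lca_binary_strict x y z : binary T ->
  is_leaf T x -> is_leaf T y -> is_leaf T z -> x <> y -> y <> z ->
  tau (lca T x y) = tau (lca T y z) -> tau (lca T x z) < tau (lca T x y).
Proof.
move=> bin leaf_x leaf_y leaf_z xy yz tau_eq; apply: tau_time.
apply: binary_lca_prec => //; apply: (time_map_inj_ancestors (y := y)) tau_eq.
  by have [_ [y_xy _]] := lcaP T x y.
by have [y_yz _] := lcaP T y z.
Qed.

Lemma time_lt_lca_leaf x y : is_leaf T x -> x <> y -> tau x < tau (lca T x y).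
Proof.
move=> leaf_x xy; apply: tau_time; split; first by have [x_xy _] := lcaP T x y.
exact: lca_neq_leaf.
Qed.

End TimeMap.

Lemma G_relE {R : realType} {VT VS : finType} (cmp : R -> R -> Prop)
    (T : ptree VT) (S : ptree VS) (sigma : VT -> VS)
    (tauT : VT -> R) (tauS : VS -> R) x y :
  G_rel cmp T S sigma tauT tauS x y <->
  x <> y /\ cmp (tauT (lca T x y)) (tauS (lca S (sigma x) (sigma y))).
Proof.
split=> [[xy [a [b [lca_a [lca_b cmp_ab]]]]] | [xy cmp_lca]].
  by rewrite (lca_eq lca_a) (lca_eq lca_b).
split=> //; exists (lca T x y), (lca S (sigma x) (sigma y)).
by split; [exact: lcaP | split; [exact: lcaP |]].
Qed.

Lemma scenario_sigma_neq {R : realType} {VT VS : finType} (T : ptree VT) (S : ptree VS)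
    (sigma : VT -> VS) (mu : VT -> VS + VS) (tauT : VT -> R) (tauS : VS -> R) x y :
  relaxed_scenario T S sigma mu tauT tauS -> is_leaf T x -> x <> y ->
  tauT (lca T x y) = tauS (lca S (sigma x) (sigma y)) -> sigma x <> sigma y.
Proof.
move=> sc leaf_x xy tau_eq sigma_xy.
have := time_lt_lca_leaf (rs_tauT sc) leaf_x xy.
by rewrite tau_eq -sigma_xy lcaxx (rs_S2 sc (rs_S1b sc leaf_x)) ltxx.
Qed.

Theorem theorem1 (R : realType) (VT VS : finType) (T : ptree VT) (S : ptree VS)
  (sigma : VT -> VS) (mu : VT -> VS + VS) (tauT : VT -> R) (tauS : VS -> R) :
  relaxed_scenario T S sigma mu tauT tauS ->
  cograph (fun x => is_leaf T x) (G_lt T S sigma tauT tauS) /\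
  cograph (fun x => is_leaf T x) (G_gt T S sigma tauT tauS) /\
  (binary S -> binary T ->
     cograph (fun x => is_leaf T x) (G_eq T S sigma tauT tauS)).
Proof.
move=> sc.
pose f x y := tauT (lca T x y); pose g x y := tauS (lca S (sigma x) (sigma y)).
have f_ultra x y z : f x z <= f x y \/ f x z <= f y z.
  exact: time_lca_ultra (rs_tauT sc) x y z.
have g_ultra x y z : g x z <= g x y \/ g x z <= g y z.
  exact: time_lca_ultra (rs_tauS sc) (sigma x) (sigma y) (sigma z).
have fC x y : f x y = f y x by rewrite /f lcaC.
have gC x y : g x y = g y x by rewrite /g lcaC.
have G_cograph cmp : cograph (is_leaf T) (fun x y => cmp (f x y) (g x y)) ->
    cograph (is_leaf T) (G_rel cmp T S sigma tauT tauS).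
  by move=> /cograph_neq; apply: cograph_ext => x y; exact: G_relE.
split; [|split].
- exact/G_cograph/(cograph_lt f_ultra g_ultra gC).
- exact/G_cograph/(cograph_lt g_ultra f_ultra fC).
move=> binS binT; apply/G_cograph/(cograph_eq f_ultra g_ultra fC gC).
  move=> x y z leaf_x leaf_y leaf_z xy yz _ _.
  exact: (time_lca_binary_strict (rs_tauT sc) binT leaf_x leaf_y leaf_z xy yz).
move=> x y z leaf_x leaf_y leaf_z xy yz f_xy f_yz.
apply: (time_lca_binary_strict (rs_tauS sc) binS (rs_sigma sc leaf_x)
  (rs_sigma sc leaf_y) (rs_sigma sc leaf_z)).
  exact: scenario_sigma_neq sc leaf_x xy f_xy.
exact: scenario_sigma_neq sc leaf_y yz f_yz.
Qed.
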